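(* Let $\mathcal V$ be a finite set, $2\le k\le|\mathcal V|-2$, let $\Gamma\subset\binom{\mathcal V}{k}$ be a code and $G\le{\rm Aut}(\Gamma)\cap{\rm Sym}(\mathcal V)$. If $\Gamma$ is $G$-strongly incidence-transitive, then $\Gamma$ is $G$-incidence-transitive and $\delta(\Gamma)\ge2$.
   Context: The Johnson graph $J(|\mathcal V|,k)$ has vertex set $\binom{\mathcal V}{k}$, the $k$-subsets of $\mathcal V$, two being adjacent iff they meet in $k-1$ points; $d$ is graph distance. A code is a proper non-empty subset $\Gamma\subset\binom{\mathcal V}{k}$; $\delta(\Gamma)$ is the least distance between distinct codewords; the neighbour set $\Gamma_1$ is the set of $k$-subsets not in $\Gamma$ at distance $1$ from some codeword. ${\rm Aut}(\Gamma)$ is the setwise stabiliser of $\Gamma$ in ${\rm Aut}(J(|\mathcal V|,k))$. $\Gamma$ is $G$-incidence-transitive if $G$ is transitive on $\{(\gamma,\gamma_1)\in\Gamma\times\Gamma_1: d(\gamma,\gamma_1)=1\}$. $\Gamma$ is $G$-strongly incidence-transitive if $G$ is transitive on $\Gamma$ and, for $\gamma\in\Gamma$, $G_\gamma$ is transitive on $\gamma\times(\mathcal V\setminus\gamma)$. *)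

From mathcomp Require Import all_boot all_fingroup.
Set Implicit Arguments. Unset Strict Implicit. Unset Printing Implicit Defensive.

Section Johnson.
Variable V : finType.
Variable k : nat.

Definition ksubsets : {set {set V}} := [set A : {set V} | #|A| == k].

Definition jadj (A B : {set V}) : bool :=
  [&& #|A| == k, #|B| == k & #|A :&: B| == k.-1].

(* d(A,B) >= m in J(|V|,k): every walk from A to B has length >= m
   (graph distance, with d = infinity if there is no walk). *)
Definition jdist_ge (A B : {set V}) (m : nat) : Prop :=
  forall p : seq {set V}, path jadj A p -> last A p = B -> m <= size p.

Definition is_code (Gam : {set {set V}}) : Prop :=
  [/\ Gam \subset ksubsets, Gam != set0 & Gam != ksubsets].

Definition min_dist_ge (Gam : {set {set V}}) (m : nat) : Prop :=
  forall g1 g2, g1 \in Gam -> g2 \in Gam -> g1 != g2 -> jdist_ge g1 g2 m.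

Definition neighbours (Gam : {set {set V}}) : {set {set V}} :=
  [set B in ksubsets | (B \notin Gam) && [exists c in Gam, jadj c B]].

(* G is contained in Aut(Gamma) /\ Sym(V): each g in G (a permutation of V,
   acting on subsets by images) fixes Gamma setwise. *)
Definition stabilises_code (G : {set {perm V}}) (Gam : {set {set V}}) : Prop :=
  forall g, g \in G -> [set (fun x : V => g x) @: A | A : {set V} in Gam] = Gam.

Definition incidence_transitive (G : {set {perm V}}) (Gam : {set {set V}}) : Prop :=
  forall c c1 e e1,
    c \in Gam -> c1 \in neighbours Gam -> jadj c c1 ->
    e \in Gam -> e1 \in neighbours Gam -> jadj e e1 ->
    exists2 g, g \in G & ((fun x : V => g x) @: c = e /\ (fun x : V => g x) @: c1 = e1).

Definition strongly_incidence_transitive (G : {set {perm V}}) (Gam : {set {set V}}) : Prop :=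
  (forall c e, c \in Gam -> e \in Gam -> exists2 g, g \in G & (fun x : V => g x) @: c = e) /\
  (forall c, c \in Gam -> forall a b a' b',
     a \in c -> b \notin c -> a' \in c -> b' \notin c ->
     exists2 g, g \in G & [/\ (fun x : V => g x) @: c = c, g a = a' & g b = b']).

End Johnson.

(* Strong incidence-transitivity moves any codeword [c] with a chosen pair
   [a \in c], [b \notin c] to any other codeword with any other such pair.
   Since the neighbours of [c] are exactly the sets [b |: (c :\ a)], this gives
   transitivity on incident pairs. If two codewords were adjacent, the same
   transport would make [Gam] closed under all one-point exchanges; as the
   Johnson graph is connected, [Gam] would then contain every k-subset,
   contradicting that a code is proper. *)

From mathcomp Require Import all_boot all_fingroup.
From mathcomp Require Import zify.

Set Implicit Arguments. Unset Strict Implicit. Unset Printing Implicit Defensive.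

Lemma imset_setD1 (aT rT : finType) (f : aT -> rT) (A : {set aT}) a :
  injective f -> f @: (A :\ a) = f @: A :\ f a.
Proof.
move=> f_inj; apply/setP => y; rewrite in_setD1.
apply/imsetP/andP => [[x] | [ya /imsetP[x xA y_fx]]].
- by rewrite in_setD1 => /andP[xa xA] ->; rewrite (inj_eq f_inj) xa imset_f.
- by exists x; rewrite // in_setD1 xA andbT; apply: contraNneq ya => xa; rewrite y_fx xa.
Qed.

Lemma imset_exchange (aT rT : finType) (f : aT -> rT) (A : {set aT}) a b :
  injective f -> f @: (b |: (A :\ a)) = f b |: (f @: A :\ f a).
Proof. by move=> f_inj; rewrite imsetU1 imset_setD1. Qed.

Section Johnson.
Variable V : finType.

Lemma card_exchange (A : {set V}) a b : a \in A -> b \notin A ->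
  #|b |: (A :\ a)| = #|A|.
Proof.
move=> aA bA; rewrite cardsU1 (cardsD1 a A) aA in_setD1 (negbTE bA) andbF /=.
lia.
Qed.

Lemma jadj_exchange k (A B : {set V}) : 0 < k -> jadj k A B ->
  exists a b, [/\ a \in A, b \notin A & B = b |: (A :\ a)].
Proof.
move=> k_gt0 /and3P[/eqP cardA /eqP cardB /eqP cardAB].
have /cards1P[a AB_a] : #|A :\: B| == 1 by rewrite cardsD cardA cardAB; lia.
have /cards1P[b BA_b] : #|B :\: A| == 1 by rewrite cardsD cardB setIC cardAB; lia.
have := set11 a; rewrite -AB_a inE => /andP[aB aA].
have := set11 b; rewrite -BA_b inE => /andP[bA bB].
exists a, b; split=> //; apply/setP => x.
move/setP/(_ x): AB_a; move/setP/(_ x): BA_b; rewrite !inE => <- <-.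
by case: (x \in A); case: (x \in B).
Qed.

Definition exchange_closed (F : {set {set V}}) : Prop :=
  forall c a b, c \in F -> a \in c -> b \notin c -> b |: (c :\ a) \in F.

Lemma exchange_closed_card (F : {set {set V}}) (c B : {set V}) :
  exchange_closed F -> c \in F -> #|B| = #|c| -> B \in F.
Proof.
move=> closedF; move: {2}#|B :\: c| (erefl #|B :\: c|) => n.
elim: n c => [|n IHn] c diff_n cF cardBc.
  have sBc : B \subset c by rewrite -setD_eq0 -cards_eq0 diff_n.
  suff -> : B = c by [].
  by apply/eqP; rewrite eqEcard sBc cardBc leqnn.
have /card_gt0P[b] : 0 < #|B :\: c| by rewrite diff_n.
rewrite inE => /andP[bc bB].
have /card_gt0P[a] : 0 < #|c :\: B|.
  by rewrite cardsD -cardBc setIC -(cardsD B c) diff_n.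
rewrite inE => /andP[aB ac].
apply: (IHn _ _ (closedF _ _ _ cF ac bc)); last by rewrite card_exchange.
suff -> : B :\: (b |: (c :\ a)) = (B :\: c) :\ b.
  by move: diff_n; rewrite (cardsD1 b (B :\: c)) inE bc bB => -[].
apply/setP => x; rewrite !inE.
by case: (x =P a) => [->|_]; [rewrite (negbTE aB) !andbF | case: (x == b)].
Qed.

Lemma code_not_exchange_closed k (Gam : {set {set V}}) :
  is_code k Gam -> ~ exchange_closed Gam.
Proof.
case=> sub_ksub /set0Pn[c cGam] /negP Gam_proper closedGam; apply: Gam_proper.
have /eqP cardc : #|c| == k by have := subsetP sub_ksub c cGam; rewrite inE.
rewrite eqEsubset sub_ksub; apply/subsetP => B; rewrite inE => /eqP cardB.
by apply: (exchange_closed_card closedGam cGam); rewrite cardB cardc.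
Qed.

End Johnson.

Section StronglyIncidenceTransitive.
Variables (V : finType) (G : {group {perm V}}) (Gam : {set {set V}}).
Hypotheses (Gam_stab : stabilises_code G Gam)
           (Gam_sit : strongly_incidence_transitive G Gam).

Lemma code_imset g c : g \in G -> c \in Gam -> (fun x => g x) @: c \in Gam.
Proof. by move=> gG cGam; rewrite -(Gam_stab gG) imset_f. Qed.

Lemma code_transport c e a b a' b' : c \in Gam -> e \in Gam ->
    a \in c -> b \notin c -> a' \in e -> b' \notin e ->
  exists2 g, g \in G & [/\ (fun x => g x) @: c = e, g a = a' & g b = b'].
Proof.
move=> cGam eGam ac bc a'e b'e; have [trans local] := Gam_sit.
have [g0 g0G g0c] := trans c e cGam eGam.
have g0a : g0 a \in e by rewrite -g0c imset_f.
have g0b : g0 b \notin e by rewrite -g0c mem_imset //; exact: perm_inj.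
have [h hG [he ha hb]] := local e eGam _ _ _ _ g0a g0b a'e b'e.
exists (g0 * h)%g; first by rewrite groupM.
rewrite !permM; split=> //.
by rewrite (eq_imset _ (permM g0 h)) (imset_comp h g0) g0c.
Qed.

Lemma code_incidence_transitive k : 0 < k -> incidence_transitive k G Gam.
Proof.
move=> k_gt0 c c1 e e1 cGam _ cc1 eGam _ ee1.
have [a [b [ac bc ->]]] := jadj_exchange k_gt0 cc1.
have [a' [b' [a'e b'e ->]]] := jadj_exchange k_gt0 ee1.
have [g gG [gc ga gb]] := code_transport cGam eGam ac bc a'e b'e.
by exists g; rewrite // imset_exchange ?gc ?ga ?gb //; exact: perm_inj.
Qed.

Lemma jadj_code_exchange_closed k c c' : 0 < k ->
  c \in Gam -> c' \in Gam -> jadj k c c' -> exchange_closed Gam.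
Proof.
move=> k_gt0 cGam c'Gam cc'.
have [a0 [b0 [a0c b0c c'E]]] := jadj_exchange k_gt0 cc'.
move=> e a b eGam ae be.
have [g gG [gc ga gb]] := code_transport cGam eGam a0c b0c ae be.
rewrite -gc -ga -gb -imset_exchange; last exact: perm_inj.
by rewrite -c'E code_imset.
Qed.

End StronglyIncidenceTransitive.

Theorem lemma2p1 (V : finType) (k : nat) (Gam : {set {set V}}) (G : {group {perm V}}) :
  2 <= k -> k + 2 <= #|V| ->
  is_code k Gam ->
  stabilises_code G Gam ->
  strongly_incidence_transitive G Gam ->
  incidence_transitive k G Gam /\ min_dist_ge k Gam 2.
Proof.
move=> k_ge2 _ codeGam stab sit; have k_gt0 : 0 < k by apply: ltnW.
split; first exact: code_incidence_transitive.
move=> c c' cGam c'Gam cc' [|c1 [|? ?]] //=.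
- by move=> _ c_eq; rewrite c_eq eqxx in cc'.
- rewrite andbT => cc1 c1_eq; rewrite {}c1_eq in cc1.
  by case: (code_not_exchange_closed codeGam);
    exact: (jadj_code_exchange_closed stab sit k_gt0 cGam c'Gam).
Qed.
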